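(* Let $\omega>0$, $-\frac{\pi}{2}<\theta_1<\theta_2<0$, $\mathcal{C}=\{(\varphi,\theta)\in[0,2\pi)\times(\theta_1,\theta_2)\}$, and let $\psi_1\neq\psi_2$ be real constants. Given $\lambda\le 0$ and $\Upsilon\in\mathbb{R}$, let $\Psi_{\lambda,\Upsilon}$ be the unique solution of \[(\Psi'(\theta)\cos\theta)'=-\lambda\Psi(\theta)\cos\theta+\Upsilon\cos\theta-\omega\sin 2\theta,\ \theta\in(\theta_1,\theta_2),\qquad \Psi(\theta_1)=\psi_1,\ \Psi(\theta_2)=\psi_2,\] let $\mathbf{u}^*_{\lambda,\Upsilon}=u^*_{\lambda,\Upsilon}\mathbf{e}_\varphi$ with $u^*_{\lambda,\Upsilon}=-\Psi_{\lambda,\Upsilon}'$ be the corresponding steady zonal solution of the system below, and let $\Omega^*_{\lambda,\Upsilon}$ be its vorticity. Suppose that $\mathbf{u}(t)=u(t)\mathbf{e}_\varphi+v(t)\mathbf{e}_\theta$ is a time-dependent solution (with some pressure $p$) of \begin{align*} & u_t + \frac{uu_\varphi}{\cos\theta} + vu_\theta - uv\tan\theta - 2\omega v\sin\theta = -\frac{p_\varphi}{\cos\theta},\\ & v_t + \frac{uv_\varphi}{\cos\theta} + vv_\theta + u^2\tan\theta + 2\omega u\sin\theta = -p_\theta,\\ & u_\varphi + (v\cos\theta)_\theta = 0 \end{align*} in $\mathcal{C}$, with $v=0$ on $\{\theta=\theta_1\}\cup\{\theta=\theta_2\}$ for all $t\ge0$, with initial data $\mathbf{u}|_{t=0}=\mathbf{u}_0=u_0\mathbf{e}_\varphi+v_0\mathbf{e}_\theta$,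 and let $\Omega(t)$ denote its vorticity, with $\Omega|_{t=0}=\Omega_0$. Then for all $t\ge 0$, \[-\lambda\|\mathbf{u}(t)-\mathbf{u}^*_{\lambda,\Upsilon}\|^2_{L^2(\mathcal{C})}+\|\Omega(t)-\Omega^*_{\lambda,\Upsilon}\|^2_{L^2(\mathcal{C})}=-\lambda\|\mathbf{u}_0-\mathbf{u}^*_{\lambda,\Upsilon}\|^2_{L^2(\mathcal{C})}+\|\Omega_0-\Omega^*_{\lambda,\Upsilon}\|^2_{L^2(\mathcal{C})}.\]
   Context: Spherical coordinates $(\varphi,\theta)$ on the unit sphere: $(\varphi,\theta)\mapsto(\cos\varphi\cos\theta,\sin\varphi\cos\theta,\sin\theta)$, with unit tangent vectors $\mathbf{e}_\varphi,\mathbf{e}_\theta$; all functions are $2\pi$-periodic in $\varphi$. The area element is $d\sigma=\cos\theta\,d\varphi\,d\theta$, and $L^2(\mathcal{C})$ norms are taken with respect to $d\sigma$ (for a vector field $f\mathbf{e}_\varphi+g\mathbf{e}_\theta$, the pointwise norm is $\sqrt{f^2+g^2}$). The vorticity of $u\,\mathbf{e}_\varphi+v\,\mathbf{e}_\theta$ is $\Omega=\frac{1}{\cos\theta}[v_\varphi-(u\cos\theta)_\theta]$. The solution $\mathbf{u}$ is understood to be a classical (smooth) solution. *)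

From Stdlib Require Import Reals.
From Coquelicot Require Import Coquelicot.
Open Scope R_scope.

(* Fields are functions of (t, phi, theta). Partial derivatives. *)
Definition d_t (f : R -> R -> R -> R) : R -> R -> R -> R :=
  fun t a b => Derive (fun s => f s a b) t.
Definition d_phi (f : R -> R -> R -> R) : R -> R -> R -> R :=
  fun t a b => Derive (fun s => f t s b) a.
Definition d_theta (f : R -> R -> R -> R) : R -> R -> R -> R :=
  fun t a b => Derive (fun s => f t a s) b.

(* C^infinity on R^3: jointly continuous, all first partials exist
   everywhere, and the partials are again C^infinity. *)
CoInductive smooth3 (f : R -> R -> R -> R) : Prop :=
  Smooth3 :
    (forall t a b,
        continuous (fun X : R * R * R => f (fst (fst X)) (snd (fst X)) (snd X)) (t, a, b)) ->
    (forall t a b,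
        ex_derive (fun s => f s a b) t /\
        ex_derive (fun s => f t s b) a /\
        ex_derive (fun s => f t a s) b) ->
    smooth3 (d_t f) -> smooth3 (d_phi f) -> smooth3 (d_theta f) -> smooth3 f.

CoInductive smooth1 (f : R -> R) : Prop :=
  Smooth1 : (forall x, ex_derive f x) -> smooth1 (Derive f) -> smooth1 f.

Definition periodic_phi (f : R -> R -> R -> R) : Prop :=
  forall t a b, f t (a + 2 * PI) b = f t a b.

(* integral over the annulus C = [0,2pi) x (th1,th2) w.r.t. dsigma = cos th dphi dth *)
Definition int_C (th1 th2 : R) (F : R -> R -> R) : R :=
  RInt (fun th => RInt (fun ph => F ph th * cos th) 0 (2 * PI)) th1 th2.

Definition vorticity (u v : R -> R -> R -> R) (t a b : R) : R :=
  / cos b * (d_phi v t a b - Derive (fun s => u t a s * cos s) b).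

Definition ustar (Psi : R -> R) (th : R) : R := - Derive Psi th.
Definition Omegastar (Psi : R -> R) (th : R) : R :=
  / cos th * (- Derive (fun s => ustar Psi s * cos s) th).

Definition Psi_solves (omega lam Ups th1 th2 psi1 psi2 : R) (Psi : R -> R) : Prop :=
  smooth1 Psi /\
  (forall th, th1 < th < th2 ->
     Derive (fun s => Derive Psi s * cos s) th
     = - lam * Psi th * cos th + Ups * cos th - omega * sin (2 * th)) /\
  Psi th1 = psi1 /\ Psi th2 = psi2.

Definition euler_solution (omega th1 th2 : R) (u v p : R -> R -> R -> R) : Prop :=
  smooth3 u /\ smooth3 v /\ smooth3 p /\
  periodic_phi u /\ periodic_phi v /\ periodic_phi p /\
  (forall t a b, 0 <= t -> th1 < b < th2 ->
     d_t u t a b + u t a b * d_phi u t a b / cos b + v t a b * d_theta u t a b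
     - u t a b * v t a b * tan b - 2 * omega * v t a b * sin b
     = - d_phi p t a b / cos b) /\
  (forall t a b, 0 <= t -> th1 < b < th2 ->
     d_t v t a b + u t a b * d_phi v t a b / cos b + v t a b * d_theta v t a b
     + (u t a b) ^ 2 * tan b + 2 * omega * u t a b * sin b
     = - d_theta p t a b) /\
  (forall t a b, 0 <= t -> th1 < b < th2 ->
     d_phi u t a b + Derive (fun s => v t a s * cos s) b = 0) /\
  (forall t a, 0 <= t -> v t a th1 = 0 /\ v t a th2 = 0).

Definition energy (lam th1 th2 : R) (Psi : R -> R) (u v : R -> R -> R -> R) (t : R) : R :=
  - lam * int_C th1 th2 (fun a b => (u t a b - ustar Psi b) ^ 2 + (v t a b) ^ 2)
  + int_C th1 th2 (fun a b => (vorticity u v t a b - Omegastar Psi b) ^ 2).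

From Stdlib Require Import Reals Lra ClassicalEpsilon FunctionalExtensionality.
From Coquelicot Require Import Coquelicot.
Open Scope R_scope.

(** Along the steady zonal flow, the equation for [Psi] says exactly that
    [Omegastar = - lam Psi + Ups - 2 omega sin theta]: the absolute vorticity of the steady
    state is an affine function of its stream function.  Combining this with the momentum
    equations and incompressibility, the time derivative of the energy density
    [(- lam |u - ustar|^2 + W^2) cos theta], where [W = Omega - Omegastar], is a divergence
    [d_phi A + d_theta B]; with the Bernoulli function [P = p + |u|^2 / 2] and the potential
    [H = lam Psi^2 / 2 - Ups Psi],
      [A = 2 lam (u - ustar) P + 2 lam u H - u W^2],   [B = v cos theta (2 lam (P + H) - W^2)].
    [A] is [2 pi]-periodic in [phi] and [B] vanishes at [theta = th1, th2] because [v] does,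
    so the divergence integrates to zero over the annulus.  Differentiating under the
    integral sign, the energy has zero derivative for [t >= 0]. *)

(** * Continuity in three real variables *)

Definition continuous3 (G : R -> R -> R -> R) (x y z : R) : Prop :=
  continuous (fun X : R * R * R => G (fst (fst X)) (snd (fst X)) (snd X)) (x, y, z).

Lemma Rabs_minus_self_lt (d : posreal) (x : R) : Rabs (x - x) < d.
Proof. rewrite Rminus_eq_0, Rabs_R0; apply cond_pos. Qed.

Section Continuous3.

Variable G : R -> R -> R -> R.

Lemma continuous3_eps x y z : continuous3 G x y z ->
  forall eps : posreal, exists d : posreal, forall x' y' z',
    Rabs (x' - x) < d -> Rabs (y' - y) < d -> Rabs (z' - z) < d ->
    Rabs (G x' y' z' - G x y z) < eps.
Proof.
intros H eps.
destruct (H (ball (G x y z) eps) (locally_ball _ _)) as [d Hd].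
exists d; intros x' y' z' hx hy hz.
exact (Hd (x', y', z') (conj (conj hx hy) hz)).
Qed.

Lemma continuous3_slice2 x y z : continuous3 G x y z -> continuous (fun s => G x s z) y.
Proof.
intros H P [e HP]; destruct (continuous3_eps x y z H e) as [d Hd].
exists d; intros y' hy; apply HP, Hd; auto using Rabs_minus_self_lt.
Qed.

Lemma continuous3_slice12 x y z : continuous3 G x y z -> continuity_2d_pt (fun r s => G r s z) x y.
Proof.
intros H e; destruct (continuous3_eps x y z H e) as [d Hd].
exists d; intros; apply Hd; auto using Rabs_minus_self_lt.
Qed.

Lemma continuous3_slice13 x y z : continuous3 G x y z -> continuity_2d_pt (fun r s => G r y s) x z.
Proof.
intros H e; destruct (continuous3_eps x y z H e) as [d Hd].
exists d; intros; apply Hd; auto using Rabs_minus_self_lt.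
Qed.

Lemma continuous3_slice23 x y z : continuous3 G x y z -> continuity_2d_pt (fun r s => G x r s) y z.
Proof.
intros H e; destruct (continuous3_eps x y z H e) as [d Hd].
exists d; intros; apply Hd; auto using Rabs_minus_self_lt.
Qed.

End Continuous3.

Lemma continuity_2d_pt_continuous_snd (h : R -> R -> R) x y :
  continuity_2d_pt h x y -> continuous (h x) y.
Proof.
intros H P [e HP]; destruct (H e) as [d Hd].
exists d; intros y' hy; apply HP, Hd; auto using Rabs_minus_self_lt.
Qed.

Lemma continuity_2d_pt_swap (h : R -> R -> R) x y :
  continuity_2d_pt h x y -> continuity_2d_pt (fun s r => h r s) y x.
Proof. intros H e; destruct (H e) as [d Hd]; exists d; intros; apply Hd; assumption. Qed.

Lemma continuous3_last2 (G : R -> R -> R) x a b :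
  continuity_2d_pt G a b -> continuous3 (fun _ a' b' => G a' b') x a b.
Proof.
intros H P [eps HP]; destruct (H eps) as [d Hd].
exists d; intros [[x' a'] b'] [[_ ha] hb]; apply HP, Hd; assumption.
Qed.

Section Continuous3_algebra.

Variables (x y z : R).

Lemma continuous3_plus f g : continuous3 f x y z -> continuous3 g x y z ->
  continuous3 (fun t a b => f t a b + g t a b) x y z.
Proof. intros Hf Hg; exact (continuous_plus _ _ _ Hf Hg). Qed.

Lemma continuous3_mult f g : continuous3 f x y z -> continuous3 g x y z ->
  continuous3 (fun t a b => f t a b * g t a b) x y z.
Proof. intros Hf Hg; exact (continuous_mult _ _ _ Hf Hg). Qed.

Lemma continuous3_opp f : continuous3 f x y z -> continuous3 (fun t a b => - f t a b) x y z.
Proof. intros Hf; exact (continuous_opp _ _ Hf). Qed.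

Lemma continuous3_minus f g : continuous3 f x y z -> continuous3 g x y z ->
  continuous3 (fun t a b => f t a b - g t a b) x y z.
Proof. intros; apply continuous3_plus, continuous3_opp; auto. Qed.

Lemma continuous3_const c : continuous3 (fun _ _ _ => c) x y z.
Proof. apply continuous_const. Qed.

Lemma continuous3_pow f n : continuous3 f x y z -> continuous3 (fun t a b => f t a b ^ n) x y z.
Proof.
intros H; induction n; simpl.
- apply continuous3_const.
- apply continuous3_mult; auto.
Qed.

Lemma continuous3_inv f : continuous3 f x y z -> f x y z <> 0 ->
  continuous3 (fun t a b => / f t a b) x y z.
Proof.
intros H Hn.
apply (continuous_comp (fun X : R * R * R => f (fst (fst X)) (snd (fst X)) (snd X)) Rinv).
- exact H.
- now apply continuous_Rinv.
Qed.

Lemma continuous3_last (h : R -> R) : (forall w, ex_derive h w) ->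
  continuous3 (fun _ _ b => h b) x y z.
Proof.
intros H.
apply (continuous_comp (fun X : R * R * R => snd X) h).
- apply continuous_snd.
- exact (ex_derive_continuous h z (H z)).
Qed.

End Continuous3_algebra.

(* Compactness of [lo, hi] turns pointwise into uniform closeness in the middle variable. *)
Lemma continuous3_unif_middle (F : R -> R -> R -> R) x0 b0 lo hi :
  (forall a, lo <= a <= hi -> continuous3 F x0 a b0) ->
  forall eps : posreal, exists d : posreal, forall x a b,
    Rabs (x - x0) < d -> Rabs (b - b0) < d -> lo <= a <= hi ->
    Rabs (F x a b - F x0 a b0) < eps.
Proof.
intros Hc eps.
assert (He2 : 0 < eps / 2) by (destruct eps; simpl; lra).
set (e2 := mkposreal _ He2).
assert (Hloc : forall a, exists d : posreal, lo <= a <= hi -> forall x a' b,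
  Rabs (x - x0) < d -> Rabs (a' - a) < d -> Rabs (b - b0) < d ->
  Rabs (F x a' b - F x0 a b0) < e2).
{ intros a.
  destruct (Rle_dec lo a) as [h1 | h1]; [destruct (Rle_dec a hi) as [h2 | h2] |].
  - destruct (continuous3_eps F x0 a b0 (Hc a (conj h1 h2)) e2) as [d Hd].
    exists d; intros _; exact Hd.
  - exists (mkposreal 1 Rlt_0_1); intros [_ h]; lra.
  - exists (mkposreal 1 Rlt_0_1); intros [h _]; lra. }
destruct (choice _ Hloc) as [delta Hdelta].
destruct (compactness_value_1d lo hi delta) as [d Hd].
exists d; intros x a b hx hb ha.
destruct (Rlt_dec (Rabs (F x a b - F x0 a b0)) eps) as [ok | nok]; [exact ok |].
exfalso; apply (Hd a ha); intros [a1 [ha1 [haa1 hd]]]; apply nok.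
assert (A1 := Hdelta a1 ha1 x a b ltac:(lra) haa1 ltac:(lra)).
assert (A2 := Hdelta a1 ha1 x0 a b0 (Rabs_minus_self_lt _ _) haa1 (Rabs_minus_self_lt _ _)).
replace (F x a b - F x0 a b0) with ((F x a b - F x0 a1 b0) - (F x0 a b0 - F x0 a1 b0)) by ring.
eapply Rle_lt_trans; [apply Rabs_triang |]; rewrite Rabs_Ropp; simpl in A1, A2; lra.
Qed.

(** * Integrals depending on parameters *)

Lemma ex_RInt_middle (F : R -> R -> R -> R) t b lo hi :
  (forall a, continuous3 F t a b) -> ex_RInt (fun a => F t a b) lo hi.
Proof.
intros H; apply (ex_RInt_continuous (V := R_CompleteNormedModule)); intros a _.
exact (continuous3_slice2 F t a b (H a)).
Qed.

Lemma continuity_2d_pt_RInt_middle (F : R -> R -> R -> R) (S : R -> Prop) lo hi x0 y0 :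
  lo <= hi -> open S -> S y0 ->
  (forall x a y, S y -> continuous3 F x a y) ->
  continuity_2d_pt (fun x y => RInt (fun a => F x a y) lo hi) x0 y0.
Proof.
intros Hlh HS Hy0 Hc eps.
assert (He : 0 < eps / (hi - lo + 1)) by (apply Rdiv_lt_0_compat; [apply cond_pos | lra]).
destruct (continuous3_unif_middle F x0 y0 lo hi (fun a _ => Hc x0 a y0 Hy0) (mkposreal _ He))
  as [d1 Hd1].
destruct (HS y0 Hy0) as [d2 Hd2].
exists (mkposreal _ (Rmin_pos _ _ (cond_pos d1) (cond_pos d2))); simpl; intros x y hx hy.
assert (hx1 : Rabs (x - x0) < d1) by (eapply Rlt_le_trans; [exact hx | apply Rmin_l]).
assert (hy1 : Rabs (y - y0) < d1) by (eapply Rlt_le_trans; [exact hy | apply Rmin_l]).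
assert (Sy : S y) by (apply Hd2; eapply Rlt_le_trans; [exact hy | apply Rmin_r]).
rewrite <- (RInt_minus (V := R_CompleteNormedModule));
  [| apply ex_RInt_middle; intros; apply Hc; auto ..].
eapply Rle_lt_trans.
- apply abs_RInt_le_const with (M := eps / (hi - lo + 1)); [exact Hlh | |].
  + apply (ex_RInt_minus (V := R_NormedModule)); apply ex_RInt_middle; intros; apply Hc; auto.
  + intros a ha; left; apply Hd1; auto.
- apply Rlt_le_trans with ((hi - lo + 1) * (eps / (hi - lo + 1))).
  + apply Rmult_lt_compat_r; auto; lra.
  + right; field; lra.
Qed.

Lemma ex_RInt_double (F : R -> R -> R -> R) (S : R -> Prop) t lo hi c d :
  lo <= hi -> open S -> (forall b, Rmin c d <= b <= Rmax c d -> S b) ->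
  (forall x a b, S b -> continuous3 F x a b) ->
  ex_RInt (fun b => RInt (fun a => F t a b) lo hi) c d.
Proof.
intros Hlh HS HcdS Hc; apply (ex_RInt_continuous (V := R_CompleteNormedModule)); intros b hb.
apply (continuity_2d_pt_continuous_snd (fun x y => RInt (fun a => F x a y) lo hi)).
exact (continuity_2d_pt_RInt_middle F S lo hi t b Hlh HS (HcdS b hb) Hc).
Qed.

Lemma is_derive_RInt_param_open (f df : R -> R -> R) (U V : R -> Prop) lo hi x :
  open U -> open V -> U x -> (forall t, Rmin lo hi <= t <= Rmax lo hi -> V t) ->
  (forall y t, U y -> V t -> is_derive (fun s => f s t) y (df y t)) ->
  (forall t, Rmin lo hi <= t <= Rmax lo hi -> continuity_2d_pt df x t) ->
  locally x (fun y => ex_RInt (f y) lo hi) ->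
  is_derive (fun y => RInt (f y) lo hi) x (RInt (df x) lo hi).
Proof.
intros HU HV Ux HlhV Hd Hc Hex.
assert (HD : forall y t, U y -> V t -> Derive (fun s => f s t) y = df y t)
  by (intros; apply is_derive_unique, Hd; assumption).
rewrite <- (RInt_ext (fun t => Derive (fun s => f s t) x))
  by (intros t ht; apply HD; [exact Ux | apply HlhV; lra]).
apply (is_derive_RInt_param f lo hi x); [| | exact Hex].
- destruct (HU x Ux) as [e He].
  exists e; intros y hy t ht; eexists; apply Hd; [apply He, hy | apply HlhV, ht].
- intros t ht; apply continuity_2d_pt_ext_loc with df; [| apply Hc, ht].
  destruct (HU x Ux) as [e1 He1], (HV t (HlhV t ht)) as [e2 He2].
  exists (mkposreal _ (Rmin_pos _ _ (cond_pos e1) (cond_pos e2))); simpl; intros y s hy hs.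
  symmetry; apply HD.
  + apply He1; eapply Rlt_le_trans; [exact hy | apply Rmin_l].
  + apply He2; eapply Rlt_le_trans; [exact hs | apply Rmin_r].
Qed.

Lemma RInt_is_derive_periodic (f df : R -> R) lo hi :
  (forall x, is_derive f x (df x)) -> (forall x, continuous df x) -> f hi = f lo ->
  RInt df lo hi = 0.
Proof.
intros Hd Hc Hper.
rewrite <- (RInt_ext (Derive f)) by (intros; apply is_derive_unique, Hd).
rewrite RInt_Derive, Hper; [apply Rminus_eq_0 | intros; eexists; apply Hd |].
intros x _; apply continuous_ext with df; [| apply Hc].
intros; symmetry; apply is_derive_unique, Hd.
Qed.

Section Double_integrals.

Variables (S : R -> Prop) (lo hi c d : R).
Hypotheses (Hlh : lo <= hi) (HS : open S) (HcdS : forall b, Rmin c d <= b <= Rmax c d -> S b).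

Lemma is_derive_RInt_double (f df : R -> R -> R -> R) t0 :
  (forall t a b, S b -> continuous3 f t a b) ->
  (forall t a b, S b -> is_derive (fun s => f s a b) t (df t a b)) ->
  (forall t a b, S b -> continuous3 df t a b) ->
  is_derive (fun t => RInt (fun b => RInt (fun a => f t a b) lo hi) c d) t0
    (RInt (fun b => RInt (fun a => df t0 a b) lo hi) c d).
Proof.
intros Hf Hd Hdf.
assert (Hinner : forall t b, S b -> is_derive (fun s => RInt (fun a => f s a b) lo hi) t
                                     (RInt (fun a => df t a b) lo hi)).
{ intros t b Sb.
  apply (is_derive_RInt_param_open (fun s a => f s a b) (fun s a => df s a b)
           (fun _ => True) (fun _ => True)); auto using open_true.
  - intros a _; apply continuous3_slice12, Hdf, Sb.
  - apply filter_forall; intros s; apply ex_RInt_middle; intros a; apply Hf, Sb. }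
apply (is_derive_RInt_param_open (fun s b => RInt (fun a => f s a b) lo hi)
         (fun s b => RInt (fun a => df s a b) lo hi) (fun _ => True) S); auto using open_true.
- intros b hb; apply (continuity_2d_pt_RInt_middle df S); auto.
- apply filter_forall; intros s; apply (ex_RInt_double f S); auto.
Qed.

Lemma RInt_double_scal_plus (F G : R -> R -> R -> R) k t :
  (forall x a b, S b -> continuous3 F x a b) -> (forall x a b, S b -> continuous3 G x a b) ->
  RInt (fun b => RInt (fun a => k * F t a b + G t a b) lo hi) c d
  = k * RInt (fun b => RInt (fun a => F t a b) lo hi) c d
    + RInt (fun b => RInt (fun a => G t a b) lo hi) c d.
Proof.
intros HF HG.
assert (Hlin : forall (f g : R -> R) a0 a1, ex_RInt f a0 a1 -> ex_RInt g a0 a1 ->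
          RInt (fun a => k * f a + g a) a0 a1 = k * RInt f a0 a1 + RInt g a0 a1).
{ intros f g a0 a1 Ef Eg.
  assert (Ekf : ex_RInt (fun a => k * f a) a0 a1)
    by exact (ex_RInt_scal (V := R_CompleteNormedModule) _ _ _ k Ef).
  transitivity (RInt (fun a => k * f a) a0 a1 + RInt g a0 a1).
  - exact (RInt_plus (V := R_CompleteNormedModule) _ _ _ _ Ekf Eg).
  - f_equal; exact (RInt_scal (V := R_CompleteNormedModule) _ _ _ k Ef). }
rewrite <- Hlin by (apply (ex_RInt_double _ S); auto).
apply RInt_ext; intros b hb.
assert (Sb : S b) by (apply HcdS; lra).
apply Hlin; apply ex_RInt_middle; auto.
Qed.

Lemma RInt_double_divergence_eq0 (A B dA dB : R -> R -> R) :
  (forall a b, S b -> is_derive (fun s => A s b) a (dA a b)) ->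
  (forall a b, S b -> continuous (fun s => dA s b) a) ->
  (forall b, Rmin c d < b < Rmax c d -> A hi b = A lo b) ->
  (forall a b, S b -> is_derive (B a) b (dB a b)) ->
  (forall a b, S b -> continuous (fun s => B s b) a) ->
  (forall a b, S b -> continuity_2d_pt dB a b) ->
  (forall a, B a c = 0) -> (forall a, B a d = 0) ->
  RInt (fun b => RInt (fun a => dA a b + dB a b) lo hi) c d = 0.
Proof.
intros HA HdA Hper HB HBc HdB Bc Bd.
assert (Hex : forall (g : R -> R -> R) b, (forall a, continuous (fun s => g s b) a) ->
          ex_RInt (fun a => g a b) lo hi)
  by (intros g b Hg; apply (ex_RInt_continuous (V := R_CompleteNormedModule)); auto).
set (h := fun y => RInt (fun a => B a y) lo hi).
assert (Dh : forall y, S y -> is_derive h y (RInt (fun a => dB a y) lo hi)).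
{ intros y Sy.
  apply (is_derive_RInt_param_open (fun y a => B a y) (fun y a => dB a y) S (fun _ => True));
    auto using open_true.
  - intros a _; apply (continuity_2d_pt_swap dB), HdB, Sy.
  - destruct (HS y Sy) as [e He]; exists e; intros z hz; apply Hex; intros a; apply HBc, He, hz. }
assert (Ch : forall y, S y -> continuous (fun y => RInt (fun a => dB a y) lo hi) y).
{ intros y Sy.
  apply (continuity_2d_pt_continuous_snd (fun _ y => RInt (fun a => dB a y) lo hi) 0).
  apply (continuity_2d_pt_RInt_middle (fun _ a y => dB a y) S); auto.
  intros x a z Sz; apply continuous3_last2, HdB, Sz. }
assert (Hphi : forall b, Rmin c d < b < Rmax c d -> RInt (fun a => dA a b) lo hi = 0).
{ intros b hb; assert (Sb : S b) by (apply HcdS; lra).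
  apply (RInt_is_derive_periodic (fun s => A s b)); [intros; apply HA, Sb | intros; apply HdA, Sb |].
  apply Hper, hb. }
transitivity (RInt (Derive h) c d).
- apply RInt_ext; intros b hb; assert (Sb : S b) by (apply HcdS; lra).
  rewrite (is_derive_unique _ _ _ (Dh b Sb)), <- (Rplus_0_l (RInt (fun a => dB a b) lo hi)).
  rewrite <- (Hphi b hb).
  exact (RInt_plus (V := R_CompleteNormedModule) _ _ _ _
           (Hex _ b (fun a => HdA a b Sb))
           (Hex _ b (fun a => continuity_2d_pt_continuous_snd _ _ _ (continuity_2d_pt_swap _ _ _ (HdB a b Sb))))).
- rewrite RInt_Derive.
  + unfold h; rewrite (RInt_ext _ (fun _ => 0) _ _ (fun a _ => Bd a)),
      (RInt_ext _ (fun _ => 0) _ _ (fun a _ => Bc a)); apply Rminus_eq_0.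
  + intros b hb; eexists; apply Dh, HcdS, hb.
  + intros b hb; apply continuous_ext_loc with (fun y => RInt (fun a => dB a y) lo hi); [| apply Ch, HcdS, hb].
    destruct (HS b (HcdS b hb)) as [e He]; exists e; intros z hz.
    symmetry; apply is_derive_unique, Dh, He, hz.
Qed.

End Double_integrals.

(** * Smooth fields on the sphere *)

Lemma smooth3_continuous3 f t a b : smooth3 f -> continuous3 f t a b.
Proof. intros [Hc _ _ _ _]; exact (Hc t a b). Qed.

Lemma smooth3_ex_derive_t f t a b : smooth3 f -> ex_derive (fun s => f s a b) t.
Proof. intros [_ Hd _ _ _]; exact (proj1 (Hd t a b)). Qed.

Lemma smooth3_ex_derive_phi f t a b : smooth3 f -> ex_derive (fun s => f t s b) a.
Proof. intros [_ Hd _ _ _]; exact (proj1 (proj2 (Hd t a b))). Qed.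

Lemma smooth3_ex_derive_theta f t a b : smooth3 f -> ex_derive (fun s => f t a s) b.
Proof. intros [_ Hd _ _ _]; exact (proj2 (proj2 (Hd t a b))). Qed.

Lemma smooth3_d_t f : smooth3 f -> smooth3 (d_t f).
Proof. intros [_ _ H _ _]; exact H. Qed.

Lemma smooth3_d_phi f : smooth3 f -> smooth3 (d_phi f).
Proof. intros [_ _ _ H _]; exact H. Qed.

Lemma smooth3_d_theta f : smooth3 f -> smooth3 (d_theta f).
Proof. intros [_ _ _ _ H]; exact H. Qed.

Section Smooth3_partials.

Variable f : R -> R -> R -> R.
Hypothesis Hf : smooth3 f.

Let Ht := smooth3_d_t f Hf.
Let Hp := smooth3_d_phi f Hf.
Let Hh := smooth3_d_theta f Hf.

Lemma d_phi_d_theta t a b : d_phi (d_theta f) t a b = d_theta (d_phi f) t a b.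
Proof.
apply (Schwarz (fun z w => f t z w) a b).
- exists (mkposreal 1 Rlt_0_1); intros x y _ _; split; [| split; [| split]].
  + exact (smooth3_ex_derive_phi f _ _ _ Hf).
  + exact (smooth3_ex_derive_theta f _ _ _ Hf).
  + exact (smooth3_ex_derive_phi _ _ _ _ Hh).
  + exact (smooth3_ex_derive_theta _ _ _ _ Hp).
- exact (continuous3_slice23 _ t a b (smooth3_continuous3 _ t a b (smooth3_d_phi _ Hh))).
- exact (continuous3_slice23 _ t a b (smooth3_continuous3 _ t a b (smooth3_d_theta _ Hp))).
Qed.

Lemma d_t_d_phi t a b : d_t (d_phi f) t a b = d_phi (d_t f) t a b.
Proof.
apply (Schwarz (fun z w => f z w b) t a).
- exists (mkposreal 1 Rlt_0_1); intros x y _ _; split; [| split; [| split]].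
  + exact (smooth3_ex_derive_t f _ _ _ Hf).
  + exact (smooth3_ex_derive_phi f _ _ _ Hf).
  + exact (smooth3_ex_derive_t _ _ _ _ Hp).
  + exact (smooth3_ex_derive_phi _ _ _ _ Ht).
- exact (continuous3_slice12 _ t a b (smooth3_continuous3 _ t a b (smooth3_d_t _ Hp))).
- exact (continuous3_slice12 _ t a b (smooth3_continuous3 _ t a b (smooth3_d_phi _ Ht))).
Qed.

Lemma d_t_d_theta t a b : d_t (d_theta f) t a b = d_theta (d_t f) t a b.
Proof.
apply (Schwarz (fun z w => f z a w) t b).
- exists (mkposreal 1 Rlt_0_1); intros x y _ _; split; [| split; [| split]].
  + exact (smooth3_ex_derive_t f _ _ _ Hf).
  + exact (smooth3_ex_derive_theta f _ _ _ Hf).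
  + exact (smooth3_ex_derive_t _ _ _ _ Hh).
  + exact (smooth3_ex_derive_theta _ _ _ _ Ht).
- exact (continuous3_slice13 _ t a b (smooth3_continuous3 _ t a b (smooth3_d_t _ Hh))).
- exact (continuous3_slice13 _ t a b (smooth3_continuous3 _ t a b (smooth3_d_theta _ Ht))).
Qed.

Lemma periodic_d_phi : periodic_phi f -> periodic_phi (d_phi f).
Proof.
intros Hper t a b; unfold d_phi.
rewrite <- (Derive_ext (fun s => f t (s + 2 * PI) b) (fun s => f t s b) a) by (intros; apply Hper).
rewrite (Derive_comp (fun s => f t s b) (fun s => s + 2 * PI) a);
  [| exact (smooth3_ex_derive_phi f _ _ _ Hf) | auto_derive; auto].
rewrite (is_derive_unique (fun s : R => s + 2 * PI) a 1) by (auto_derive; auto; ring).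
ring.
Qed.

End Smooth3_partials.

Lemma periodic_d_theta f : periodic_phi f -> periodic_phi (d_theta f).
Proof. intros Hper t a b; apply Derive_ext; intros; apply Hper. Qed.

Lemma smooth1_ex_derive3 Psi : smooth1 Psi ->
  (forall x, ex_derive Psi x) /\ (forall x, ex_derive (Derive Psi) x) /\
  (forall x, ex_derive (Derive (Derive Psi)) x) /\
  (forall x, ex_derive (Derive (Derive (Derive Psi))) x).
Proof. intros [P0 [P1 [P2 [P3 _]]]]; auto. Qed.

Definition off_poles (b : R) : Prop := - PI / 2 < b < PI / 2.

Lemma off_poles_cos_neq0 b : off_poles b -> cos b <> 0.
Proof. intros [h1 h2]; apply Rgt_not_eq, cos_gt_0; lra. Qed.

Lemma open_off_poles : open off_poles.
Proof. exact (open_and _ _ (open_gt _) (open_lt _)). Qed.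

Lemma off_poles_band th1 th2 b : - PI / 2 < th1 -> th2 < PI / 2 -> th1 <= b <= th2 -> off_poles b.
Proof. intros h1 h2 hb; split; lra. Qed.

Lemma cos_band_neq0 th1 th2 b : - PI / 2 < th1 -> th2 < PI / 2 -> th1 < b < th2 -> cos b <> 0.
Proof. intros h1 h2 hb; apply off_poles_cos_neq0, (off_poles_band th1 th2); lra. Qed.

Definition vort (u v : R -> R -> R -> R) (t a b : R) : R :=
  / cos b * (d_phi v t a b - (d_theta u t a b * cos b - u t a b * sin b)).

Definition vort_star (Psi : R -> R) (b : R) : R :=
  / cos b * (Derive (Derive Psi) b * cos b - Derive Psi b * sin b).

Lemma vorticity_eq_vort u v : smooth3 u -> vorticity u v = vort u v.
Proof.
intros Hu; do 3 (apply functional_extensionality; intros ?).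
unfold vorticity, vort; rewrite Derive_mult;
  [| exact (smooth3_ex_derive_theta u _ _ _ Hu) | eexists; apply is_derive_cos].
rewrite (is_derive_unique cos _ _ (is_derive_cos _)); change (Derive (u ?t ?a) ?b) with (d_theta u t a b); ring.
Qed.

Lemma Omegastar_eq_vort_star Psi : smooth1 Psi -> Omegastar Psi = vort_star Psi.
Proof.
intros HPsi; destruct (smooth1_ex_derive3 Psi HPsi) as [_ [P1 _]].
apply functional_extensionality; intro b; unfold Omegastar, vort_star, ustar.
rewrite Derive_mult, Derive_opp; [| auto_derive; apply P1 | eexists; apply is_derive_cos].
rewrite (is_derive_unique cos _ _ (is_derive_cos _)); ring.
Qed.

(** * The energy density and its fluxes *)

Section Densities.

Variables (lam Ups : R) (Psi : R -> R) (u v p : R -> R -> R -> R).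

Definition kinetic_density (t a b : R) : R :=
  ((u t a b - ustar Psi b) ^ 2 + v t a b ^ 2) * cos b.

Definition vort_defect (t a b : R) : R := vort u v t a b - vort_star Psi b.

Definition enstrophy_density (t a b : R) : R := vort_defect t a b ^ 2 * cos b.

Definition energy_density (t a b : R) : R :=
  - lam * kinetic_density t a b + enstrophy_density t a b.

Definition vort_t (t a b : R) : R :=
  / cos b * (d_t (d_phi v) t a b - (d_t (d_theta u) t a b * cos b - d_t u t a b * sin b)).

Definition energy_density_t (t a b : R) : R :=
  (- lam * (2 * (u t a b - ustar Psi b) * d_t u t a b + 2 * v t a b * d_t v t a b)
   + 2 * vort_defect t a b * vort_t t a b) * cos b.

Definition bernoulli (t a b : R) : R := p t a b + (u t a b ^ 2 + v t a b ^ 2) / 2.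

Definition stream_potential (b : R) : R := lam * Psi b * Psi b / 2 - Ups * Psi b.

Definition flux_phi (t a b : R) : R :=
  2 * lam * (u t a b - ustar Psi b) * bernoulli t a b - u t a b * vort_defect t a b ^ 2
  + 2 * lam * u t a b * stream_potential b.

Definition flux_theta (t a b : R) : R :=
  v t a b * cos b * (2 * lam * (bernoulli t a b + stream_potential b) - vort_defect t a b ^ 2).

Definition vort_theta (t a b : R) : R :=
  sin b / cos b ^ 2 * (d_phi v t a b - (d_theta u t a b * cos b - u t a b * sin b))
  + / cos b * (d_theta (d_phi v) t a b - (d_theta (d_theta u) t a b * cos b
      - d_theta u t a b * sin b - (d_theta u t a b * sin b + u t a b * cos b))).

Definition vort_star_theta (b : R) : R :=
  sin b / cos b ^ 2 * (Derive (Derive Psi) b * cos b - Derive Psi b * sin b)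
  + / cos b * (Derive (Derive (Derive Psi)) b * cos b - Derive (Derive Psi) b * sin b
      - (Derive (Derive Psi) b * sin b + Derive Psi b * cos b)).

Definition flux_phi_dphi (t a b : R) : R :=
  let B_a := d_phi p t a b + u t a b * d_phi u t a b + v t a b * d_phi v t a b in
  let W_a := / cos b * (d_phi (d_phi v) t a b
               - (d_phi (d_theta u) t a b * cos b - d_phi u t a b * sin b)) in
  2 * lam * (d_phi u t a b * bernoulli t a b + (u t a b - ustar Psi b) * B_a)
  - d_phi u t a b * vort_defect t a b ^ 2 - 2 * u t a b * vort_defect t a b * W_a
  + 2 * lam * d_phi u t a b * stream_potential b.

Definition flux_theta_dtheta (t a b : R) : R :=
  let B_b := d_theta p t a b + u t a b * d_theta u t a b + v t a b * d_theta v t a b in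
  let H_b := lam * Psi b * Derive Psi b - Ups * Derive Psi b in
  let W_b := vort_theta t a b - vort_star_theta b in
  let vc_b := d_theta v t a b * cos b - v t a b * sin b in
  vc_b * (2 * lam * (bernoulli t a b + stream_potential b) - vort_defect t a b ^ 2)
  + v t a b * cos b * (2 * lam * (B_b + H_b) - 2 * vort_defect t a b * W_b).

End Densities.

(* [auto_derive] leaves [Derive (fun x => f x)], which [ring] does not identify with [Derive f]. *)
Ltac eta_Derive :=
  repeat match goal with
  | |- context [Derive (fun x => ?f x)] => change (Derive (fun x => f x)) with (Derive f)
  end.

Section Density_derivatives.

Variables (lam Ups : R) (Psi : R -> R) (u v p : R -> R -> R -> R).
Hypotheses (Hu : smooth3 u) (Hv : smooth3 v) (Hp : smooth3 p) (HPsi : smooth1 Psi).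

Lemma is_derive_energy_density t a b :
  is_derive (fun s => energy_density lam Psi u v s a b) t (energy_density_t lam Psi u v t a b).
Proof.
assert (E1 := fun t a b => smooth3_ex_derive_t _ t a b (smooth3_d_phi _ Hv)).
assert (E2 := fun t a b => smooth3_ex_derive_t _ t a b (smooth3_d_theta _ Hu)).
assert (E3 := fun t a b => smooth3_ex_derive_t _ t a b Hu).
assert (E4 := fun t a b => smooth3_ex_derive_t _ t a b Hv).
unfold energy_density, energy_density_t, kinetic_density, enstrophy_density, vort_defect, vort_t, vort.
(* Abstracting the partial derivatives keeps [auto_derive] from unfolding them. *)
revert E1 E2; generalize (d_phi v) (d_theta u); intros V1 U1 E1 E2.
unfold d_t; auto_derive; [repeat split; auto | ring].
Qed.

Lemma is_derive_flux_phi t a b : cos b <> 0 ->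
  is_derive (fun s => flux_phi lam Ups Psi u v p t s b) a (flux_phi_dphi lam Ups Psi u v p t a b).
Proof.
intros Hc.
assert (E1 := fun t a b => smooth3_ex_derive_phi _ t a b (smooth3_d_phi _ Hv)).
assert (E2 := fun t a b => smooth3_ex_derive_phi _ t a b (smooth3_d_theta _ Hu)).
assert (E3 := fun t a b => smooth3_ex_derive_phi _ t a b Hu).
assert (E4 := fun t a b => smooth3_ex_derive_phi _ t a b Hv).
assert (E5 := fun t a b => smooth3_ex_derive_phi _ t a b Hp).
unfold flux_phi, flux_phi_dphi, bernoulli, vort_defect, vort.
revert E1 E2; remember (d_phi v) as V1 eqn:HV1; remember (d_theta u) as U1 eqn:HU1; intros E1 E2.
auto_derive; [repeat split; auto |].
subst V1 U1; unfold d_phi, d_theta; field; exact Hc.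
Qed.

Lemma is_derive_vort_star b : cos b <> 0 -> is_derive (vort_star Psi) b (vort_star_theta Psi b).
Proof.
intros Hc; destruct (smooth1_ex_derive3 _ HPsi) as [_ [P1 [P2 P3]]].
unfold vort_star, vort_star_theta; revert P1 P2 P3.
remember (Derive (Derive (Derive Psi))) as D3 eqn:HD3.
remember (Derive (Derive Psi)) as D2 eqn:HD2.
remember (Derive Psi) as D1 eqn:HD1; intros P1 P2 P3.
auto_derive; [repeat split; auto |].
subst D3 D2 D1; eta_Derive; field; exact Hc.
Qed.

Lemma is_derive_flux_theta t a b : cos b <> 0 ->
  is_derive (fun s => flux_theta lam Ups Psi u v p t a s) b (flux_theta_dtheta lam Ups Psi u v p t a b).
Proof.
intros Hc; destruct (smooth1_ex_derive3 _ HPsi) as [P0 [P1 [P2 P3]]].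
assert (E1 := fun t a b => smooth3_ex_derive_theta _ t a b (smooth3_d_phi _ Hv)).
assert (E2 := fun t a b => smooth3_ex_derive_theta _ t a b (smooth3_d_theta _ Hu)).
assert (E3 := fun t a b => smooth3_ex_derive_theta _ t a b Hu).
assert (E4 := fun t a b => smooth3_ex_derive_theta _ t a b Hv).
assert (E5 := fun t a b => smooth3_ex_derive_theta _ t a b Hp).
unfold flux_theta, flux_theta_dtheta, bernoulli, vort_defect, vort, vort_star, vort_theta,
  vort_star_theta, stream_potential.
revert E1 E2; remember (d_phi v) as V1 eqn:HV1; remember (d_theta u) as U1 eqn:HU1; intros E1 E2.
revert P1 P2 P3.
remember (Derive (Derive (Derive Psi))) as D3 eqn:HD3.
remember (Derive (Derive Psi)) as D2 eqn:HD2.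
remember (Derive Psi) as D1 eqn:HD1; intros P1 P2 P3.
auto_derive; [repeat split; auto |].
subst V1 U1 D3 D2 D1; unfold d_phi, d_theta; eta_Derive; field; exact Hc.
Qed.

End Density_derivatives.

Ltac smooth3_tower :=
  match goal with
  | |- smooth3 (d_t ?f) => apply (smooth3_d_t f); smooth3_tower
  | |- smooth3 (d_phi ?f) => apply (smooth3_d_phi f); smooth3_tower
  | |- smooth3 (d_theta ?f) => apply (smooth3_d_theta f); smooth3_tower
  | |- smooth3 _ => assumption
  end.

Ltac continuity3_step :=
  match goal with
  | |- continuous3 (fun t a b => ?c) _ _ _ => apply continuous3_const
  | |- continuous3 (fun t a b => @?F t a b + @?G t a b) _ _ _ => apply (continuous3_plus _ _ _ F G)
  | |- continuous3 (fun t a b => @?F t a b - @?G t a b) _ _ _ => apply (continuous3_minus _ _ _ F G)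
  | |- continuous3 (fun t a b => @?F t a b * @?G t a b) _ _ _ => apply (continuous3_mult _ _ _ F G)
  | |- continuous3 (fun t a b => - @?F t a b) _ _ _ => apply (continuous3_opp _ _ _ F)
  | |- continuous3 (fun t a b => @?F t a b ^ ?n) _ _ _ => apply (continuous3_pow _ _ _ F n)
  | |- continuous3 (fun t a b => / @?F t a b) _ _ _ =>
      apply (continuous3_inv _ _ _ F); [| cbv beta; first [assumption | apply pow_nonzero; assumption]]
  (* [cos], [sin] and [Derive^k Psi] are matched syntactically: unifying [cos] with
     [Derive Psi] unfolds both definitions and is extremely slow. *)
  | |- continuous3 (fun t a b => cos b) _ _ _ =>
      apply continuous3_last; intros; eexists; apply is_derive_cos
  | |- continuous3 (fun t a b => sin b) _ _ _ =>
      apply continuous3_last; intros; eexists; apply is_derive_sin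
  | |- continuous3 (fun t a b => ?h b) _ _ _ =>
      apply (continuous3_last _ _ _ h);
      match goal with H : forall w, ex_derive h w |- _ => exact H end
  | |- continuous3 (fun t a b => ?f t a b) _ _ _ =>
      exact (smooth3_continuous3 f _ _ _ ltac:(smooth3_tower))
  end.

Ltac continuity3 := repeat continuity3_step.

Section Density_continuity.

Variables (lam Ups : R) (Psi : R -> R) (u v p : R -> R -> R -> R).
Hypotheses (Hu : smooth3 u) (Hv : smooth3 v) (Hp : smooth3 p) (HPsi : smooth1 Psi).
Variables (t a b : R).
Hypothesis Hc : cos b <> 0.

(* The atoms [Derive^k Psi b] are discharged by [continuity3] from these. *)
Let P := smooth1_ex_derive3 _ HPsi.
Let P0 := proj1 P.
Let P1 := proj1 (proj2 P).
Let P2 := proj1 (proj2 (proj2 P)).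
Let P3 := proj2 (proj2 (proj2 P)).

Lemma continuous3_kinetic_density : continuous3 (kinetic_density Psi u v) t a b.
Proof. unfold kinetic_density, ustar; continuity3. Qed.

Lemma continuous3_enstrophy_density : continuous3 (enstrophy_density Psi u v) t a b.
Proof. unfold enstrophy_density, vort_defect, vort, vort_star, Rdiv; continuity3. Qed.

Lemma continuous3_energy_density_t : continuous3 (energy_density_t lam Psi u v) t a b.
Proof. unfold energy_density_t, vort_defect, vort_t, vort, vort_star, ustar, Rdiv; continuity3. Qed.

Lemma continuous3_flux_phi_dphi : continuous3 (flux_phi_dphi lam Ups Psi u v p) t a b.
Proof.
unfold flux_phi_dphi, bernoulli, vort_defect, vort, vort_star, stream_potential, ustar, Rdiv;
  cbv zeta; continuity3.
Qed.

Lemma continuous3_flux_theta : continuous3 (flux_theta lam Ups Psi u v p) t a b.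
Proof.
unfold flux_theta, bernoulli, vort_defect, vort, vort_star, stream_potential, Rdiv; continuity3.
Qed.

Lemma continuous3_flux_theta_dtheta : continuous3 (flux_theta_dtheta lam Ups Psi u v p) t a b.
Proof.
unfold flux_theta_dtheta, bernoulli, vort_defect, vort, vort_star, vort_theta, vort_star_theta,
  stream_potential, Rdiv; cbv zeta; continuity3.
Qed.

End Density_continuity.

(** * The energy identity *)

Section Zonal_flow.

Variables (omega lam Ups th1 th2 psi1 psi2 : R) (Psi : R -> R).
Hypothesis HPsi : Psi_solves omega lam Ups th1 th2 psi1 psi2 Psi.
Hypotheses (Hth1 : - PI / 2 < th1) (Hth2 : th2 < PI / 2).

Lemma vort_star_eq b : th1 < b < th2 ->
  vort_star Psi b = - lam * Psi b + Ups - 2 * omega * sin b.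
Proof.
intros hb; destruct HPsi as [HS [HODE _]].
destruct (smooth1_ex_derive3 _ HS) as [P0 [P1 _]].
assert (Hc := cos_band_neq0 th1 th2 b Hth1 Hth2 hb).
assert (HO := HODE b hb).
rewrite Derive_mult, (is_derive_unique cos _ _ (is_derive_cos b)), sin_2a in HO
  by (auto; eexists; apply is_derive_cos).
change (Derive (fun x => Derive Psi x) b) with (Derive (Derive Psi) b) in HO.
unfold vort_star.
replace (Derive (Derive Psi) b * cos b - Derive Psi b * sin b)
  with (- lam * Psi b * cos b + Ups * cos b - omega * (2 * sin b * cos b)) by (rewrite <- HO; ring).
field; exact Hc.
Qed.

Lemma vort_star_theta_eq b : th1 < b < th2 ->
  vort_star_theta Psi b = - lam * Derive Psi b - 2 * omega * cos b.
Proof.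
intros hb; destruct (smooth1_ex_derive3 _ (proj1 HPsi)) as [P0 _].
assert (Hc := cos_band_neq0 th1 th2 b Hth1 Hth2 hb).
rewrite <- (is_derive_unique _ _ _ (is_derive_vort_star Psi (proj1 HPsi) b Hc)).
apply is_derive_unique, is_derive_ext_loc with (fun s => - lam * Psi s + Ups - 2 * omega * sin s).
- apply (filter_imp (fun s => th1 < s < th2)); [| exact (open_and _ _ (open_gt _) (open_lt _) b hb)].
  intros s hs; symmetry; apply vort_star_eq, hs.
- auto_derive; [auto | eta_Derive; ring].
Qed.

End Zonal_flow.

Section Euler_flow.

Variables (omega th1 th2 : R) (u v p : R -> R -> R -> R).
Hypothesis HE : euler_solution omega th1 th2 u v p.
Hypotheses (Hth1 : - PI / 2 < th1) (Hth2 : th2 < PI / 2).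

Lemma d_t_u_eq t a b : 0 <= t -> th1 < b < th2 ->
  d_t u t a b = - d_phi p t a b / cos b - (u t a b * d_phi u t a b / cos b
    + v t a b * d_theta u t a b - u t a b * v t a b * (sin b / cos b)
    - 2 * omega * v t a b * sin b).
Proof.
intros ht hb; pose proof HE as (_ & _ & _ & _ & _ & _ & Hmom & _).
assert (H := Hmom t a b ht hb); unfold tan in H; lra.
Qed.

Lemma d_t_v_eq t a b : 0 <= t -> th1 < b < th2 ->
  d_t v t a b = - d_theta p t a b - (u t a b * d_phi v t a b / cos b
    + v t a b * d_theta v t a b + u t a b * u t a b * (sin b / cos b)
    + 2 * omega * u t a b * sin b).
Proof.
intros ht hb; pose proof HE as (_ & _ & _ & _ & _ & _ & _ & Hmom & _).
assert (H := Hmom t a b ht hb); unfold tan in H; simpl in H; lra.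
Qed.

Lemma d_phi_u_eq t a b : 0 <= t -> th1 < b < th2 ->
  d_phi u t a b = - (d_theta v t a b * cos b - v t a b * sin b).
Proof.
intros ht hb; pose proof HE as (_ & Hv & _ & _ & _ & _ & _ & _ & Hdiv & _).
assert (H := Hdiv t a b ht hb).
rewrite Derive_mult, (is_derive_unique cos _ _ (is_derive_cos b)) in H
  by (first [exact (smooth3_ex_derive_theta v t a b Hv) | eexists; apply is_derive_cos]).
change (Derive (v t a) b) with (d_theta v t a b) in H; lra.
Qed.

Lemma d_t_d_phi_v_eq t a b : 0 <= t -> th1 < b < th2 ->
  d_t (d_phi v) t a b = - d_phi (d_theta p) t a b
    - ((d_phi u t a b * d_phi v t a b + u t a b * d_phi (d_phi v) t a b) / cos b
       + d_phi v t a b * d_theta v t a b + v t a b * d_theta (d_phi v) t a b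
       + 2 * u t a b * d_phi u t a b * (sin b / cos b) + 2 * omega * d_phi u t a b * sin b).
Proof.
intros ht hb; pose proof HE as (Hu & Hv & Hp & _).
assert (Hc := cos_band_neq0 th1 th2 b Hth1 Hth2 hb).
rewrite (d_t_d_phi v Hv), <- (d_phi_d_theta v Hv).
unfold d_phi at 1; rewrite (Derive_ext (fun s => d_t v t s b) (fun s => - d_theta p t s b
  - (u t s b * d_phi v t s b / cos b + v t s b * d_theta v t s b
     + u t s b * u t s b * (sin b / cos b) + 2 * omega * u t s b * sin b)))
  by (intros; apply d_t_v_eq; assumption).
assert (E1 := fun t a b => smooth3_ex_derive_phi _ t a b (smooth3_d_phi _ Hv)).
assert (E2 := fun t a b => smooth3_ex_derive_phi _ t a b (smooth3_d_theta _ Hv)).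
assert (E3 := fun t a b => smooth3_ex_derive_phi _ t a b Hu).
assert (E4 := fun t a b => smooth3_ex_derive_phi _ t a b Hv).
assert (E5 := fun t a b => smooth3_ex_derive_phi _ t a b (smooth3_d_theta _ Hp)).
revert E1 E2 E5.
remember (d_phi v) as V1 eqn:HV1; remember (d_theta v) as V2 eqn:HV2;
  remember (d_theta p) as Q2 eqn:HQ2; intros E1 E2 E5.
apply is_derive_unique; auto_derive; [repeat split; auto |].
subst V1 V2 Q2; unfold d_phi; field; exact Hc.
Qed.

Lemma d_t_d_theta_u_eq t a b : 0 <= t -> th1 < b < th2 ->
  d_t (d_theta u) t a b = - (d_phi (d_theta p) t a b / cos b + d_phi p t a b * sin b / (cos b * cos b))
    - ((d_theta u t a b * d_phi u t a b + u t a b * d_phi (d_theta u) t a b) / cos b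
       + u t a b * d_phi u t a b * sin b / (cos b * cos b) + d_theta v t a b * d_theta u t a b
       + v t a b * d_theta (d_theta u) t a b
       - (d_theta u t a b * v t a b + u t a b * d_theta v t a b) * (sin b / cos b)
       - u t a b * v t a b * (sin b * sin b + cos b * cos b) / (cos b * cos b)
       - 2 * omega * (d_theta v t a b * sin b + v t a b * cos b)).
Proof.
intros ht hb; pose proof HE as (Hu & Hv & Hp & _).
assert (Hc := cos_band_neq0 th1 th2 b Hth1 Hth2 hb).
rewrite (d_t_d_theta u Hu), (d_phi_d_theta u Hu), (d_phi_d_theta p Hp).
unfold d_theta at 1; rewrite (Derive_ext_loc (fun s => d_t u t a s) (fun s => - d_phi p t a s / cos s
  - (u t a s * d_phi u t a s / cos s + v t a s * d_theta u t a s
     - u t a s * v t a s * (sin s / cos s) - 2 * omega * v t a s * sin s))).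
2:{ apply (filter_imp (fun s => th1 < s < th2)); [| exact (open_and _ _ (open_gt _) (open_lt _) b hb)].
    intros s hs; apply d_t_u_eq; assumption. }
assert (E1 := fun t a b => smooth3_ex_derive_theta _ t a b (smooth3_d_phi _ Hu)).
assert (E2 := fun t a b => smooth3_ex_derive_theta _ t a b (smooth3_d_theta _ Hu)).
assert (E3 := fun t a b => smooth3_ex_derive_theta _ t a b Hu).
assert (E4 := fun t a b => smooth3_ex_derive_theta _ t a b Hv).
assert (E5 := fun t a b => smooth3_ex_derive_theta _ t a b (smooth3_d_phi _ Hp)).
revert E1 E2 E5.
remember (d_phi u) as U1 eqn:HU1; remember (d_theta u) as U2 eqn:HU2;
  remember (d_phi p) as Q1 eqn:HQ1; intros E1 E2 E5.
apply is_derive_unique; auto_derive; [repeat split; auto |].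
subst U1 U2 Q1; unfold d_theta; field; exact Hc.
Qed.

End Euler_flow.

Lemma is_derive_zero_const (f df : R -> R) :
  (forall s, is_derive f s (df s)) -> (forall s, 0 <= s -> df s = 0) ->
  forall t, 0 <= t -> f t = f 0.
Proof.
intros Hd H0 t Ht.
destruct (Rle_lt_or_eq_dec 0 t Ht) as [Htp | <-]; [| reflexivity].
destruct (MVT_gen f 0 t df) as [c [hc Hc]].
- intros x _; apply Hd.
- intros x _; apply continuity_pt_filterlim, (ex_derive_continuous f); eexists; apply Hd.
- rewrite Rmin_left, Rmax_right in hc by lra.
  rewrite H0 in Hc by lra; lra.
Qed.

Section Energy_balance.

Variables (omega lam Ups th1 th2 psi1 psi2 : R) (Psi : R -> R) (u v p : R -> R -> R -> R).
Hypothesis HPsi : Psi_solves omega lam Ups th1 th2 psi1 psi2 Psi.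
Hypothesis HE : euler_solution omega th1 th2 u v p.
Hypotheses (Hth1 : - PI / 2 < th1) (Hth12 : th1 <= th2) (Hth2 : th2 < PI / 2).

Lemma energy_density_t_eq_divergence t a b : 0 <= t -> th1 < b < th2 ->
  energy_density_t lam Psi u v t a b
  = flux_phi_dphi lam Ups Psi u v p t a b + flux_theta_dtheta lam Ups Psi u v p t a b.
Proof.
intros ht hb.
assert (Hc := cos_band_neq0 th1 th2 b Hth1 Hth2 hb).
unfold energy_density_t, flux_phi_dphi, flux_theta_dtheta, vort_t, vort_defect, vort, bernoulli,
  stream_potential, ustar, vort_theta; cbv zeta.
rewrite (vort_star_eq omega lam Ups th1 th2 psi1 psi2), (vort_star_theta_eq omega lam Ups th1 th2 psi1 psi2)
  by assumption.
rewrite (d_t_d_phi_v_eq omega th1 th2 u v p), (d_t_d_theta_u_eq omega th1 th2 u v p),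
  (d_t_u_eq omega th1 th2 u v p), (d_t_v_eq omega th1 th2 u v p), (d_phi_u_eq omega th1 th2 u v p)
  by assumption.
field; exact Hc.
Qed.

Let HPsi1 : smooth1 Psi := proj1 HPsi.

Let band_off_poles b : Rmin th1 th2 <= b <= Rmax th1 th2 -> off_poles b.
Proof.
rewrite Rmin_left, Rmax_right by exact Hth12; apply off_poles_band; assumption.
Qed.

Let two_PI_ge0 : 0 <= 2 * PI.
Proof. assert (PI > 0) by apply PI_RGT_0; lra. Qed.

Lemma energy_eq_RInt_density s :
  energy lam th1 th2 Psi u v s
  = RInt (fun b => RInt (fun a => energy_density lam Psi u v s a b) 0 (2 * PI)) th1 th2.
Proof.
pose proof HE as (Hu & Hv & _).
unfold energy, int_C; rewrite (vorticity_eq_vort u v Hu), (Omegastar_eq_vort_star Psi HPsi1).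
symmetry; apply (RInt_double_scal_plus off_poles); auto using open_off_poles.
- intros; apply continuous3_kinetic_density; assumption.
- intros; apply continuous3_enstrophy_density, off_poles_cos_neq0; assumption.
Qed.

Lemma is_derive_energy s :
  is_derive (energy lam th1 th2 Psi u v) s
    (RInt (fun b => RInt (fun a => energy_density_t lam Psi u v s a b) 0 (2 * PI)) th1 th2).
Proof.
pose proof HE as (Hu & Hv & _).
apply is_derive_ext with (fun s => RInt (fun b => RInt (fun a => energy_density lam Psi u v s a b)
                                         0 (2 * PI)) th1 th2);
  [intros; symmetry; apply energy_eq_RInt_density |].
apply (is_derive_RInt_double off_poles); auto using open_off_poles.
- intros t a b Hb; apply continuous3_plus; [apply continuous3_mult; [apply continuous3_const |] |].
  + apply continuous3_kinetic_density; assumption.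
  + apply continuous3_enstrophy_density, off_poles_cos_neq0; assumption.
- intros; apply is_derive_energy_density; assumption.
- intros; apply continuous3_energy_density_t, off_poles_cos_neq0; assumption.
Qed.

Lemma energy_derivative_eq0 s : 0 <= s ->
  RInt (fun b => RInt (fun a => energy_density_t lam Psi u v s a b) 0 (2 * PI)) th1 th2 = 0.
Proof.
intros Hs; pose proof HE as (Hu & Hv & Hp & Pu & Pv & Pp & _ & _ & _ & Hbd).
rewrite (RInt_ext _ (fun b => RInt (fun a => flux_phi_dphi lam Ups Psi u v p s a b
                                          + flux_theta_dtheta lam Ups Psi u v p s a b) 0 (2 * PI))).
2:{ intros b hb; rewrite Rmin_left, Rmax_right in hb by exact Hth12.
    apply RInt_ext; intros a _; apply energy_density_t_eq_divergence; assumption. }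
apply (RInt_double_divergence_eq0 off_poles 0 (2 * PI) th1 th2 two_PI_ge0 open_off_poles band_off_poles
         (flux_phi lam Ups Psi u v p s) (flux_theta lam Ups Psi u v p s)).
- intros a b Hb; apply is_derive_flux_phi, off_poles_cos_neq0; assumption.
- intros a b Hb; apply continuous3_slice2, continuous3_flux_phi_dphi, off_poles_cos_neq0; assumption.
- intros b _; unfold flux_phi, bernoulli, vort_defect, vort.
  replace (2 * PI) with (0 + 2 * PI) by ring.
  rewrite !Pu, !Pv, !Pp, (periodic_d_phi v Hv Pv), (periodic_d_theta u Pu); reflexivity.
- intros a b Hb; apply is_derive_flux_theta, off_poles_cos_neq0; assumption.
- intros a b Hb; apply continuous3_slice2, continuous3_flux_theta, off_poles_cos_neq0; assumption.
- intros a b Hb; apply continuous3_slice23, continuous3_flux_theta_dtheta, off_poles_cos_neq0; assumption.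
- intros a; unfold flux_theta; rewrite (proj1 (Hbd s a Hs)); ring.
- intros a; unfold flux_theta; rewrite (proj2 (Hbd s a Hs)); ring.
Qed.

End Energy_balance.

Theorem theorem3p2 (omega th1 th2 psi1 psi2 lam Ups : R) (Psi : R -> R)
  (u v p : R -> R -> R -> R) :
  0 < omega ->
  - PI / 2 < th1 -> th1 < th2 -> th2 < 0 ->
  psi1 <> psi2 ->
  lam <= 0 ->
  Psi_solves omega lam Ups th1 th2 psi1 psi2 Psi ->
  euler_solution omega th1 th2 u v p ->
  forall t, 0 <= t ->
    energy lam th1 th2 Psi u v t = energy lam th1 th2 Psi u v 0.
Proof.
intros _ Hth1 Hth12 Hth2 _ _ HPsi HE.
assert (Hth2' : th2 < PI / 2) by (assert (PI > 0) by apply PI_RGT_0; lra).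
apply (is_derive_zero_const _ _ (is_derive_energy omega lam Ups th1 th2 psi1 psi2 Psi u v p
         HPsi HE Hth1 (Rlt_le _ _ Hth12) Hth2')).
exact (energy_derivative_eq0 omega lam Ups th1 th2 psi1 psi2 Psi u v p
         HPsi HE Hth1 (Rlt_le _ _ Hth12) Hth2').
Qed.
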